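(* Let $q\in(0,1]$ and $x,y\in[0,q]$. If $|x-y|\le q/e^2$, then $|\chi(x\|q)-\chi(y\|q)|\le\chi(|x-y|\,\|\,q)$.
   Context: For $q>0$, $\chi(x\|q)=x\log_2^2(x/q)$ for $x\in(0,1]$, extended by continuity with $\chi(0\|q)=0$. *)

From Stdlib Require Import Reals.
Open Scope R_scope.

Definition log2 (t : R) : R := ln t / ln 2.

(* chi(x||q) = x * log2^2 (x/q) for x > 0, extended by continuity with
   chi(0||q) = 0.  (Only used for x in [0,1], q > 0.) *)
Definition chi (x q : R) : R :=
  if Rle_dec x 0 then 0 else x * (log2 (x / q)) ^ 2.

(* Write chi(t||q) = g(t) / ln^2 2 with g(t) = t ln^2(t/q), whose derivative
   is g'(t) = l (l + 2) for l = ln(t/q).  Since g' >= -1 and g(d) >= 4 d when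
   ln(d/q) <= -2, the mean value theorem gives g(a+d) - g(a) >= -g(d).  For the
   other direction, u |-> g(u+a) - g(u) is nonincreasing on (0, d]: there
   ln(u/q) <= -2 and ln(u/q) <= ln((u+a)/q) <= 0, while l |-> l (l + 2) is
   decreasing on (-oo, -1] and nonpositive on [-1, 0].  Letting u -> 0+ gives g(a+d) - g(d) <= g(a). *)

From Stdlib Require Import Reals Lra Psatz.
From Coquelicot Require Import Coquelicot.
Open Scope R_scope.

Lemma continuity_pt_le_from_right (f : R -> R) (a c d : R) :
  continuity_pt f a -> 0 < d ->
  (forall u, 0 < u < d -> c <= f (a + u)) -> c <= f a.
Proof.
  intros f_cont d_pos c_le.
  apply Rnot_lt_le; intros fa_lt.
  destruct (f_cont (c - f a) ltac:(lra)) as [r [r_pos near_a]].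
  set (u := Rmin (r / 2) (d / 2)).
  assert (u_pos : 0 < u) by (apply Rmin_glb_lt; lra).
  assert (u_le : u <= r / 2 /\ u <= d / 2) by (split; [apply Rmin_l | apply Rmin_r]).
  assert (dist_lt : R_dist (f (a + u)) (f a) < c - f a).
  { apply near_a; split.
    - split; [exact I | lra].
    - simpl; unfold R_dist; rewrite Rabs_pos_eq; lra. }
  simpl in dist_lt; unfold R_dist in dist_lt; apply Rabs_def2 in dist_lt.
  specialize (c_le u ltac:(lra)); lra.
Qed.

Section XLogSquare.

Variable q : R.
Hypothesis q_pos : 0 < q.

Definition xlnsq (t : R) : R := t * ln (t / q) ^ 2.

Definition xlnsq' (t : R) : R := ln (t / q) * (ln (t / q) + 2).

Lemma xlnsq_derive (t : R) : 0 < t -> derivable_pt_lim xlnsq t (xlnsq' t).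
Proof.
  intros t_pos; apply is_derive_Reals; unfold xlnsq, xlnsq'.
  auto_derive.
  - apply Rdiv_lt_0_compat; lra.
  - unfold Rdiv; field; lra.
Qed.

Lemma xlnsq0 : xlnsq 0 = 0.
Proof. unfold xlnsq; ring. Qed.

Lemma xlnsq_ge0 (t : R) : 0 <= t -> 0 <= xlnsq t.
Proof. intros t_ge0; apply Rmult_le_pos; [lra | apply pow2_ge_0]. Qed.

Lemma xlnsq'_ge (t : R) : -1 <= xlnsq' t.
Proof. unfold xlnsq'; pose proof (Rle_0_sqr (ln (t / q) + 1)); unfold Rsqr in *; lra. Qed.

Lemma ln_div_le (s t : R) : 0 < s <= t -> ln (s / q) <= ln (t / q).
Proof.
  intros [s_pos s_le]; apply ln_le.
  - apply Rdiv_lt_0_compat; lra.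
  - apply Rmult_le_compat_r; [left; apply Rinv_0_lt_compat |]; lra.
Qed.

Lemma ln_div_le0 (t : R) : 0 < t <= q -> ln (t / q) <= 0.
Proof.
  intros t_bounds; rewrite <- ln_1, <- (Rdiv_diag q) by lra.
  apply ln_div_le, t_bounds.
Qed.

Lemma ln_div_le_m2 (d : R) : 0 < d <= q / exp 2 -> ln (d / q) <= -2.
Proof.
  intros [d_pos d_le].
  assert (exp_pos2 : 0 < exp 2) by apply exp_pos.
  replace (-2) with (ln (/ exp 2)) by (rewrite ln_Rinv, ln_exp by lra; ring).
  apply ln_le; [apply Rdiv_lt_0_compat; lra |].
  apply (Rmult_le_reg_r q); [lra |].
  unfold Rdiv in *; rewrite Rmult_assoc, Rinv_l; lra.
Qed.

Lemma xlnsq'_le (u v : R) :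
  0 < u <= v -> v <= q -> ln (u / q) <= -2 -> xlnsq' v <= xlnsq' u.
Proof.
  intros u_le_v v_le lnu_le.
  pose proof (ln_div_le u v u_le_v); pose proof (ln_div_le0 v ltac:(lra)).
  unfold xlnsq'; nra.
Qed.

Lemma xlnsq_increment_ge (a d : R) :
  0 < a -> 0 < d -> ln (d / q) <= -2 -> - xlnsq d <= xlnsq (a + d) - xlnsq a.
Proof.
  intros a_pos d_pos lnd_le.
  destruct (MVT_cor2 xlnsq xlnsq' a (a + d)) as [c [mvt _]]; [lra | |].
  { intros c c_bounds; apply xlnsq_derive; lra. }
  pose proof (xlnsq'_ge c).
  assert (d_le : d <= xlnsq d).
  { assert (sq_ge : 4 <= ln (d / q) ^ 2) by (simpl; nra).
    unfold xlnsq; nra. }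
  replace (a + d - a) with d in mvt by ring; nra.
Qed.

Lemma xlnsq_shift_antitone (a u d : R) :
  0 < a -> 0 < u <= d -> a + d <= q -> ln (d / q) <= -2 ->
  xlnsq (a + d) - xlnsq d <= xlnsq (a + u) - xlnsq u.
Proof.
  intros a_pos [u_pos u_le] ad_le lnd_le.
  destruct (Rle_lt_or_eq_dec u d u_le) as [u_lt | <-]; [| lra].
  set (h t := xlnsq (a + t) - xlnsq t).
  destruct (MVT_cor2 h (fun t => xlnsq' (a + t) - xlnsq' t) u d)
    as [c [mvt c_bounds]]; [exact u_lt | |].
  { intros c c_bounds; apply derivable_pt_lim_minus; [| apply xlnsq_derive; lra].
    replace (xlnsq' (a + c)) with (xlnsq' (a + c) * (0 + 1)) by ring.
    apply (derivable_pt_lim_comp (fun t => a + t)).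
    - apply derivable_pt_lim_plus; [apply derivable_pt_lim_const | apply derivable_pt_lim_id].
    - apply xlnsq_derive; lra. }
  assert (slope_le : xlnsq' (a + c) <= xlnsq' c).
  { apply xlnsq'_le; [lra | lra |].
    pose proof (ln_div_le c d ltac:(lra)); lra. }
  unfold h in mvt; nra.
Qed.

Lemma xlnsq_increment_le (a d : R) :
  0 < a -> 0 < d -> a + d <= q -> ln (d / q) <= -2 ->
  xlnsq (a + d) - xlnsq a <= xlnsq d.
Proof.
  intros a_pos d_pos ad_le lnd_le.
  enough (xlnsq (a + d) - xlnsq d <= xlnsq a) by lra.
  apply (continuity_pt_le_from_right xlnsq a _ d); [| exact d_pos |].
  - apply derivable_continuous_pt; exists (xlnsq' a); apply xlnsq_derive, a_pos.
  - intros u u_bounds.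
    pose proof (xlnsq_shift_antitone a u d a_pos ltac:(lra) ad_le lnd_le).
    pose proof (xlnsq_ge0 u ltac:(lra)); lra.
Qed.

Lemma Rabs_xlnsq_increment (a d : R) :
  0 <= a -> 0 < d -> a + d <= q -> d <= q / exp 2 ->
  Rabs (xlnsq (a + d) - xlnsq a) <= xlnsq d.
Proof.
  intros a_ge0 d_pos ad_le d_le.
  destruct (Rle_lt_or_eq_dec 0 a a_ge0) as [a_pos | <-].
  - pose proof (ln_div_le_m2 d ltac:(lra)).
    apply Rabs_le; split.
    + apply xlnsq_increment_ge; assumption.
    + apply xlnsq_increment_le; assumption.
  - rewrite Rplus_0_l, xlnsq0, Rminus_0_r, Rabs_pos_eq; [lra |].
    apply xlnsq_ge0; lra.
Qed.

End XLogSquare.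

Lemma chi_xlnsq (q t : R) : 0 <= t -> chi t q = xlnsq q t / ln 2 ^ 2.
Proof.
  intros t_ge0; unfold chi, xlnsq, log2; pose proof ln_lt_2.
  destruct (Rle_dec t 0); [replace t with 0 by lra |]; field; lra.
Qed.

Lemma Rabs_chi_increment (q a d : R) :
  0 < q -> 0 <= a -> 0 <= d -> a + d <= q -> d <= q / exp 2 ->
  Rabs (chi (a + d) q - chi a q) <= chi d q.
Proof.
  intros q_pos a_ge0 d_ge0 ad_le d_le.
  destruct (Rle_lt_or_eq_dec 0 d d_ge0) as [d_pos | <-].
  - assert (scale_pos : 0 < / ln 2 ^ 2).
    { apply Rinv_0_lt_compat, pow_lt; pose proof ln_lt_2; lra. }
    rewrite !chi_xlnsq by lra; unfold Rdiv.
    rewrite <- Rmult_minus_distr_r, Rabs_mult, (Rabs_pos_eq (/ _)) by lra.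
    apply Rmult_le_compat_r; [lra |].
    apply Rabs_xlnsq_increment; assumption.
  - rewrite Rplus_0_r, Rminus_diag, Rabs_R0; unfold chi.
    destruct (Rle_dec 0 0); lra.
Qed.

Theorem lemma26 (q x y : R) :
  0 < q <= 1 ->
  0 <= x <= q ->
  0 <= y <= q ->
  Rabs (x - y) <= q / exp 2 ->
  Rabs (chi x q - chi y q) <= chi (Rabs (x - y)) q.
Proof.
  intros q_bounds x_bounds y_bounds xy_le.
  destruct (Rle_or_lt y x) as [y_le_x | x_lt_y].
  - rewrite (Rabs_pos_eq (x - y)) in * by lra.
    replace x with (y + (x - y)) at 1 by ring.
    apply Rabs_chi_increment; lra.
  - rewrite (Rabs_minus_sym (chi x q)), (Rabs_minus_sym x y) in *.
    rewrite (Rabs_pos_eq (y - x)) in * by lra.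
    replace y with (x + (y - x)) at 1 by ring.
    apply Rabs_chi_increment; lra.
Qed.
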